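(* Let $f:[0,T]\times\mathbb R^n\times\mathbb D[0,T]\times\mathbb R\times\mathbb R^{1\times d}\times\mathbb L^2(E,\nu)\to\mathbb R$ and $\xi:\mathbb R^n\to\mathbb R$ satisfy Assumptions (MS) and (ML) below. For $m\in\mathbb N$ define $$f_m\bigl(r,x,(q_v)_{v\in[r,T]},y,z,\psi\bigr):=f\bigl(r,x,(\varphi_m(q_v))_{v\in[r,T]},\varphi_m(y),\varphi_m(z),\varphi_m(\psi\circ\zeta_m)\bigr),$$ where $\varphi_m(x)=(-m)\vee(x\wedge m)$ is applied componentwise to $z$ and $\psi$, and $(\psi\circ\zeta_m)(e):=\psi(e)\mathbf 1_{|e|\ge1/m}$ (componentwise). Then $(f_m)_{m\in\mathbb N}$ (together with $\xi$) satisfy Assumptions (MS) and (ML) uniformly in $m\in\mathbb N$. Moreover, for each $m$, $f_m$ is a.e. bounded and globally Lipschitz in $(q,y,z,\psi)$: there is $L_m>0$ with $$|f_m(t,x,(q_v)_{v\in[t,T]},y,z,\psi)-f_m(t,x,(q'_v)_{v\in[t,T]},y',z',\psi')|\le L_m\Bigl(\sup_{v\in[t,T]}|q_v-q'_v|+|y-y'|+|z-z'|+\|\psi-\psi'\|_{\mathbb L^2(\nu)}\Bigr)$$ for all arguments, for a.e. $t$.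
   Context: Setting: $T>0$, $d,k,n\in\mathbb N$. $k$ $\sigma$-finite measures $\nu^1,\dots,\nu^k$ on $\mathbb R_0=\mathbb R\setminus\{0\}$ with $\int|e|^2\nu^i(de)<\infty$ (compensators $\nu^i(de)dt$ of independent Poisson random measures $\mu^i$ on the filtered probability space generated by them and a $d$-dimensional Brownian motion, with completed canonical filtration $\mathbb F$). $E=\mathbb R_0^k$; $\mathbb L^2(E,\nu)$ = $\psi=(\psi^i)_{i\le k}$, $\psi^i:\mathbb R_0\to\mathbb R$ Borel, with $\|\psi\|^2_{\mathbb L^2(\nu)}=\sum_i\int|\psi^i|^2d\nu^i<\infty$, and $\int_E g(\psi(e))\nu(de):=\sum_i\int g(\psi^i(e))\nu^i(de)$; $\|\psi\|_{\mathbb L^\infty(\nu)}$ the $\nu$-essential sup. $\mathbb D[0,T]$ real càdlàg functions. $\mathbb E_{\mathcal F_t}$ conditional expectation. $j_\gamma(u)=\frac1\gamma(e^{\gamma u}-1-\gamma u)$. Assumption (MS): (i) for every $(x,y,z,\psi)$ and every càdlàg adapted $(Y_v)$, $t\mapsto\mathbb E_{\mathcal F_t}f(t,x,(Y_v)_{v\in[t,T]},y,z,\psi)$ is progressively measurable; (ii) there are constants $\beta,\delta\ge0,\gamma>0$ and a positive non-random function $l$ on $[0,T]$ such that for every $(x,q,y,z,\psi)$, for $dt$-a.e. $t$, $-l_t-\delta\sup_{v\in[t,T]}|q_v|-\beta|y|-\frac\gamma2|z|^2-\int_Ej_\gamma(-\psi(e))\nu(de)\le f(t,x,(q_v)_{v\in[t,T]},y,z,\psi)\le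 l_t+\delta\sup_{v\in[t,T]}|q_v|+\beta|y|+\frac\gamma2|z|^2+\int_Ej_\gamma(\psi(e))\nu(de)$; (iii) $\sup_x|\xi(x)|<\infty$, $\sup_tl_t<\infty$. Assumption (ML): for each $M>0$ there is $K_M>0$, and constants $K_\xi\ge0,\rho\ge0,\alpha\in(0,1]$, such that for all arguments with $|y|,|y'|,\|\psi\|_{\mathbb L^\infty(\nu)},\|\psi'\|_{\mathbb L^\infty(\nu)},\sup_v|q_v|,\sup_v|q'_v|\le M$, for $dt$-a.e. $t$: $|f(t,x,(q_v),y,z,\psi)-f(t,x,(q'_v),y',z',\psi')|\le K_M(\sup_{v\in[t,T]}|q_v-q'_v|+|y-y'|+\|\psi-\psi'\|_{\mathbb L^2(\nu)})+K_M(1+|z|+|z'|+\|\psi\|_{\mathbb L^2(\nu)}+\|\psi'\|_{\mathbb L^2(\nu)})|z-z'|$; $|f(t,x,(q_v),y,z,\psi)-f(t,x',(q_v),y,z,\psi)|\le K_M(1+[|x|\vee|x'|]^\rho+|z|^2+\|\psi\|^2_{\mathbb L^2(\nu)})|x-x'|^\alpha$; $|\xi(x)-\xi(x')|\le K_\xi|x-x'|^\alpha$. *)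

From HB Require Import structures.
From mathcomp Require Import all_boot all_order all_algebra.
From mathcomp Require Import all_classical all_reals all_analysis.
From mathcomp Require Import ess_sup_inf.
Set Implicit Arguments. Unset Strict Implicit. Unset Printing Implicit Defensive.
Import Order.TTheory GRing.Theory Num.Def Num.Theory.
Import numFieldNormedType.Exports.
Local Open Scope classical_set_scope.
Local Open Scope ring_scope.

Definition enorm (R : realType) (p : nat) (x : 'rV[R]_p) : R :=
  Num.sqrt (\sum_(i < p) x ord0 i ^+ 2).

Definition phi (R : realType) (m : nat) (x : R) : R :=
  Num.max (- m%:R) (Num.min x m%:R).

Definition jfun (R : realType) (g u : R) : R := (expR (g * u) - 1 - g * u) / g.

Definition cadlag (R : realType) (T : R) (g : R -> R) : Prop :=
  (forall t, 0 <= t < T -> g s @[s --> t^'+] --> g t) /\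
  (forall t, 0 < t <= T -> exists l : R, g s @[s --> t^'-] --> l).

Definition supab (R : realType) (a b : R) (g : R -> R) : R :=
  sup [set `|g v| | v in [set v | a <= v <= b]].

Definition L2fun (R : realType) (k : nat)
  (nu : 'I_k -> {measure set R -> \bar R}) (psi : 'I_k -> R -> R) : Prop :=
  forall i, measurable_fun setT (psi i) /\
            (\int[nu i]_e ((psi i e) ^+ 2)%:E < +oo)%E.

Definition L2norm (R : realType) (k : nat)
  (nu : 'I_k -> {measure set R -> \bar R}) (psi : 'I_k -> R -> R) : R :=
  Num.sqrt (fine (\sum_(i < k) \int[nu i]_e ((psi i e) ^+ 2)%:E)%E).

Definition Linfnorm (R : realType) (k : nat)
  (nu : 'I_k -> {measure set R -> \bar R}) (psi : 'I_k -> R -> R) : \bar R :=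
  (\big[Order.max/0%E]_(i < k) ess_sup (nu i) (fun e => (`|psi i e|)%:E))%E.

Definition intE (R : realType) (k : nat)
  (nu : 'I_k -> {measure set R -> \bar R}) (g : R -> R) (psi : 'I_k -> R -> R)
  : \bar R :=
  (\sum_(i < k) \int[nu i]_e (g (psi i e))%:E)%E.

Definition sub_psi (R : realType) (k : nat) (psi psi' : 'I_k -> R -> R) :=
  fun i e => psi i e - psi' i e.

Definition gen_type (R : realType) (n d k : nat) :=
  R -> 'rV[R]_n -> (R -> R) -> R -> 'rV[R]_d -> ('I_k -> R -> R) -> R.

Definition fm (R : realType) (n d k : nat) (f : gen_type R n d k) (m : nat)
  : gen_type R n d k :=
  fun r x q y z psi =>
    f r x (fun v => phi m (q v)) (phi m y) (map_mx (phi m) z)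
      (fun i e => phi m (psi i e * (if (m%:R)^-1 <= `|e| then 1 else 0))).

Definition filtration (R : realType) (dO : measure_display) (O : measurableType dO)
  (F : R -> set (set O)) : Prop :=
  (forall t, sigma_algebra setT (F t)) /\
  (forall t, F t `<=` measurable) /\
  (forall s t, s <= t -> F s `<=` F t).

Definition meas_wrt (R : realType) (dO : measure_display) (O : measurableType dO)
  (G : set (set O)) (X : O -> R) : Prop :=
  forall B : set R, measurable B -> G (X @^-1` B).

Definition adapted (R : realType) (dO : measure_display) (O : measurableType dO)
  (F : R -> set (set O)) (Y : R -> O -> R) : Prop :=
  forall t, meas_wrt (F t) (Y t).

Definition prog_meas (R : realType) (T : R) (dO : measure_display)
  (O : measurableType dO) (F : R -> set (set O)) (G : R -> O -> R) : Prop :=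
  forall t, 0 <= t <= T -> forall B : set R, measurable B ->
    <<s [set: R * O],
        [set AC | exists (A : set R) (C : set O),
           [/\ measurable A, A `<=` [set s | 0 <= s <= t], F t C & AC = A `*` C]] >>
      [set p : R * O | 0 <= p.1 <= t /\ B (G p.1 p.2)].

Definition cond_exp_version (R : realType) (dO : measure_display)
  (O : measurableType dO) (P : probability O R) (Ft : set (set O)) (X G : O -> R)
  : Prop :=
  [/\ meas_wrt Ft G, P.-integrable setT (fun w => (G w)%:E) &
      forall A, Ft A -> (\int[P]_(w in A) (G w)%:E = \int[P]_(w in A) (X w)%:E)%E].

Definition MS_i (R : realType) (T : R) (n d k : nat)
  (nu : 'I_k -> {measure set R -> \bar R})
  (dO : measure_display) (O : measurableType dO) (P : probability O R)
  (F : R -> set (set O)) (f : gen_type R n d k) : Prop :=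
  forall x y z psi (Y : R -> O -> R),
    L2fun nu psi -> adapted F Y -> (forall w, cadlag T (fun v => Y v w)) ->
    (forall t, 0 <= t <= T ->
       P.-integrable setT (fun w => (f t x (fun v => Y v w) y z psi)%:E)) ->
    exists G : R -> O -> R, prog_meas T F G /\
      forall t, 0 <= t <= T ->
        cond_exp_version P (F t) (fun w => f t x (fun v => Y v w) y z psi) (G t).

Definition MS_ii (R : realType) (T : R) (n d k : nat)
  (nu : 'I_k -> {measure set R -> \bar R}) (f : gen_type R n d k)
  (beta delta gamma : R) (l : R -> R) : Prop :=
  forall x q y z psi, cadlag T q -> L2fun nu psi ->
    {ae lebesgue_measure, forall t, 0 <= t <= T ->
      ((- l t - delta * supab t T q - beta * `|y| - gamma / 2 * enorm z ^+ 2)%:E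
         - intE nu (jfun gamma) (fun i e => (- psi i e)%R)
       <= (f t x q y z psi)%:E)%E /\
      ((f t x q y z psi)%:E
       <= (l t + delta * supab t T q + beta * `|y| + gamma / 2 * enorm z ^+ 2)%:E
          + intE nu (jfun gamma) psi)%E}.

Definition MS_iii (R : realType) (T : R) (n : nat) (xi : 'rV[R]_n -> R)
  (l : R -> R) : Prop :=
  (exists C, forall x, `|xi x| <= C) /\ (exists C, forall t, 0 <= t <= T -> l t <= C).

Definition MS_consts (R : realType) (T : R) (n d k : nat)
  (nu : 'I_k -> {measure set R -> \bar R}) (f : gen_type R n d k)
  (xi : 'rV[R]_n -> R) (beta delta gamma : R) (l : R -> R) : Prop :=
  [/\ [/\ 0 <= beta, 0 <= delta & 0 < gamma], (forall t, 0 <= t <= T -> 0 < l t),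
      MS_ii T nu f beta delta gamma l & MS_iii T xi l].

Definition MS (R : realType) (T : R) (n d k : nat)
  (nu : 'I_k -> {measure set R -> \bar R})
  (dO : measure_display) (O : measurableType dO) (P : probability O R)
  (F : R -> set (set O)) (f : gen_type R n d k) (xi : 'rV[R]_n -> R) : Prop :=
  MS_i T nu P F f /\ exists beta delta gamma l, MS_consts T nu f xi beta delta gamma l.

Definition ML_consts (R : realType) (T : R) (n d k : nat)
  (nu : 'I_k -> {measure set R -> \bar R}) (f : gen_type R n d k)
  (xi : 'rV[R]_n -> R) (K : R -> R) (Kxi rho alpha : R) : Prop :=
  [/\ (forall M, 0 < M -> 0 < K M), [/\ 0 <= Kxi, 0 <= rho & 0 < alpha <= 1],
      (forall M, 0 < M ->
       forall x x' q q' y y' z z' psi psi',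
         cadlag T q -> cadlag T q' -> L2fun nu psi -> L2fun nu psi' ->
         `|y| <= M -> `|y'| <= M ->
         (Linfnorm nu psi <= M%:E)%E -> (Linfnorm nu psi' <= M%:E)%E ->
         supab 0 T q <= M -> supab 0 T q' <= M ->
         {ae lebesgue_measure, forall t, 0 <= t <= T ->
           `|f t x q y z psi - f t x q' y' z' psi'|
             <= K M * (supab t T (fun v => q v - q' v) + `|y - y'|
                       + L2norm nu (sub_psi psi psi'))
                + K M * (1 + enorm z + enorm z' + L2norm nu psi + L2norm nu psi')
                      * enorm (z - z')
           /\
           `|f t x q y z psi - f t x' q y z psi|
             <= K M * (1 + (Num.max (enorm x) (enorm x')) `^ rho + enorm z ^+ 2
                       + L2norm nu psi ^+ 2) * (enorm (x - x')) `^ alpha})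
    & forall x x', `|xi x - xi x'| <= Kxi * (enorm (x - x')) `^ alpha].

Definition ML (R : realType) (T : R) (n d k : nat)
  (nu : 'I_k -> {measure set R -> \bar R}) (f : gen_type R n d k)
  (xi : 'rV[R]_n -> R) : Prop :=
  exists K Kxi rho alpha, ML_consts T nu f xi K Kxi rho alpha.

From HB Require Import structures.
From mathcomp Require Import all_boot all_order all_algebra.
From mathcomp Require Import all_classical all_reals all_analysis.
From mathcomp Require Import ess_sup_inf measurable_realfun lra ring.
Import Order.TTheory GRing.Theory Num.Def Num.Theory.
Import numFieldNormedType.Exports.
Set Implicit Arguments. Unset Strict Implicit. Unset Printing Implicit Defensive.
Local Open Scope classical_set_scope.
Local Open Scope ring_scope.

(* Truncating every argument of f by the bounded, 1-Lipschitz, sign-preserving map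
   phi_m (and discarding the jumps of size below 1/m) can only decrease the
   quantities in (MS) and (ML): sup-norms, |y|, |z|, the L^2 and L^infinity norms,
   and the integrals of j_gamma, since j_gamma increases with |u| on each half-line.
   Hence the f_m satisfy (MS) and (ML) with the constants of f.  For fixed m all
   truncated arguments are bounded by m, and the truncated jumps by m^2 |e|, which is
   square integrable; so the growth bound of (MS) bounds f_m, and the local Lipschitz
   bound of (ML) at level M = m becomes a global one. *)

Lemma ler_sqr_norm (R : realDomainType) (x y : R) : `|x| <= `|y| -> x ^+ 2 <= y ^+ 2.
Proof.
by move=> xy; rewrite -(real_normK (num_real x)) -(real_normK (num_real y)) ler_sqr ?nnegrE.
Qed.

Section truncation.
Variable R : realType.
Implicit Types a b x y : R.

Definition between0 a b := (0 <= a <= b) || (b <= a <= 0).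

Lemma between0_norm a b : between0 a b -> `|a| <= `|b|.
Proof.
rewrite ler_norml => /orP[]/andP[h1 h2];
  [rewrite ger0_norm | rewrite ler0_norm]; try lra; apply/andP; split; lra.
Qed.

Variable m : nat.

Lemma phi_cases x :
  [\/ phi m x = x /\ - m%:R <= x <= m%:R,
      phi m x = m%:R /\ m%:R < x | phi m x = - m%:R /\ x < - m%:R].
Proof.
have m0 : (0 : R) <= m%:R by [].
rewrite /phi maxEle minEle.
case: (leP x m%:R) => xm /=; last first.
  by apply: Or32; rewrite ifT //; lra.
case: (leP (- m%:R) x) => mx; first by apply: Or31; split => //; apply/andP.
by apply: Or33.
Qed.

Lemma phi0 : phi m 0 = 0 :> R.
Proof. by have m0 : (0 : R) <= m%:R by []; case: (phi_cases 0) => -[-> //]; lra. Qed.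

Lemma phiN x : phi m (- x) = - phi m x.
Proof.
have m0 : (0 : R) <= m%:R by [].
by case: (phi_cases x) => -[-> h]; case: (phi_cases (- x)) => -[-> h']; lra.
Qed.

Lemma phi_bound x : `|phi m x| <= m%:R.
Proof.
have m0 : (0 : R) <= m%:R by [].
by rewrite ler_norml; case: (phi_cases x) => -[-> h]; apply/andP; split; lra.
Qed.

(* Monotonicity and the 1-Lipschitz property of phi in one statement. *)
Lemma phi_between0_sub x y : between0 (phi m x - phi m y) (x - y).
Proof.
have m0 : (0 : R) <= m%:R by [].
case: (phi_cases x) => -[-> hx]; case: (phi_cases y) => -[-> hy];
  case: (leP y x) => yx; apply/orP; by [left; apply/andP; split; lra
                                       | right; apply/andP; split; lra].
Qed.

Lemma phi_between0 x : between0 (phi m x) x.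
Proof. by have := phi_between0_sub x 0; rewrite phi0 !subr0. Qed.

Lemma phi_norm_le x : `|phi m x| <= `|x|.
Proof. exact/between0_norm/phi_between0. Qed.

Lemma phi_lipschitz x y : `|phi m x - phi m y| <= `|x - y|.
Proof. exact/between0_norm/phi_between0_sub. Qed.

Lemma phi_continuous : continuous (@phi R m).
Proof.
move=> x; apply/cvgrPdist_le => e e0; near=> y.
apply: le_trans (phi_lipschitz x y) _.
by near: y; apply: (cvgrPdist_le _ _).1 => //; exact: cvg_id.
Unshelve. all: by end_near. Qed.

End truncation.

Section jfun.
Variables (R : realType) (g : R).

Lemma measurable_jfun : measurable_fun setT (jfun g).
Proof.
have mgu : measurable_fun setT (fun u : R => g * u) by exact: measurable_funM.
apply: measurable_funM => //; apply: measurable_funB => //; apply: measurable_funB => //.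
exact: measurableT_comp (@measurable_expR R) mgu.
Qed.

Hypothesis g_gt0 : 0 < g.

Lemma jfun_ge0 u : 0 <= jfun g u.
Proof. by rewrite /jfun divr_ge0 ?(ltW g_gt0) //; have := expR_ge1Dx (g * u); lra. Qed.

Lemma jfun0 : jfun g 0 = 0.
Proof. by rewrite /jfun mulr0 expR0 !subrr mul0r. Qed.

Lemma jfun_between0 u v : between0 v u -> jfun g v <= jfun g u.
Proof.
move=> vu; rewrite /jfun ler_pM2r ?invr_gt0 //.
set a := g * v; set b := g * u.
(* expR lies above its tangent at a *)
have tangent : (expR a - 1) * (b - a) <= expR b - b - (expR a - a).
  have -> : expR b = expR (b - a) * expR a by rewrite -expRD subrK.
  have := ler_wpM2r (ltW (expR_gt0 a)) (expR_ge1Dx (b - a)).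
  rewrite mulrDl mul1r [(b - a) * _]mulrC mulrBl mul1r; lra.
have sign : 0 <= (expR a - 1) * (b - a).
  have := expR_ge1Dx a; case/orP: vu => /andP[v0 vu] ea.
  - have a0 : 0 <= a := mulr_ge0 (ltW g_gt0) v0.
    by rewrite mulr_ge0 ?subr_ge0 ?ler_pM2l //; lra.
  - rewrite mulr_le0 ?subr_le0 ?ler_pM2l // -expR0 ler_expR.
    by rewrite /a pmulr_rle0.
lra.
Qed.

Lemma jfun_le_sym u c : `|u| <= c -> jfun g u <= jfun g c + jfun g (- c).
Proof.
rewrite ler_norml => /andP[cu uc]; case: (leP 0 u) => u0.
- have := jfun_ge0 (- c); have : between0 u c by rewrite /between0 u0 uc.
  move/jfun_between0; lra.
- have := jfun_ge0 c; have : between0 u (- c) by rewrite /between0 cu (ltW u0) orbT.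
  move/jfun_between0; lra.
Qed.

End jfun.

Section enorm.
Variables (R : realType) (p : nat).
Implicit Types a b : 'rV[R]_p.

Lemma enorm_ge0 a : 0 <= enorm a.
Proof. exact: sqrtr_ge0. Qed.

Lemma enorm_le a b : (forall i, `|a ord0 i| <= `|b ord0 i|) -> enorm a <= enorm b.
Proof.
move=> ab; rewrite /enorm ler_sqrt; last by rewrite sumr_ge0 // => i _; exact: sqr_ge0.
by apply: ler_sum => i _; exact: ler_sqr_norm.
Qed.

Lemma enorm_le_const a (c : R) :
  (forall i, `|a ord0 i| <= c) -> enorm a <= enorm (const_mx c : 'rV_p).
Proof.
move=> ac; apply: enorm_le => i; rewrite mxE.
by apply: le_trans (ac i) _; exact: ler_norm.
Qed.

End enorm.

Section cadlag.
Variables (R : realType) (T : R).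

Lemma cadlag_comp (g h : R -> R) : continuous h -> cadlag T g -> cadlag T (h \o g).
Proof.
move=> ch [rc ll]; split => [t tT|t tT]; first exact: (continuous_cvg _ (ch _) (rc t tT)).
by have [l gl] := ll t tT; exists (h l); exact: (continuous_cvg _ (ch l)).
Qed.

Lemma cadlagB (g h : R -> R) :
  cadlag T g -> cadlag T h -> cadlag T (fun v => g v - h v).
Proof.
move=> [gr gl] [hr hl]; split => [t tT|t tT]; first exact: cvgB (gr t tT) (hr t tT).
have [[a ga] [b hb]] := (gl t tT, hl t tT).
by exists (a - b); exact: cvgB.
Qed.

Lemma cadlag_locally_bounded (g : R -> R) x : cadlag T g -> 0 <= x <= T ->
  exists B, \forall s \near x, 0 <= s <= T -> `|g s| <= B.
Proof.
move=> [rc ll] /andP[x0 xT].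
have right_bounded : \forall s \near x, x < s -> s <= T -> `|g s| <= `|g x| + 1.
  have [xT'|Tx] := ltP x T; last by near=> s => xs sT; lra.
  have /cvgrPdist_le/(_ 1 ltr01) := rc x (introT andP (conj x0 xT')).
  rewrite near_withinE; apply: filterS => s gs xs _.
  by have := ler_distD (g x) (g s) 0; rewrite !subr0 distrC; lra.
have [l left_bounded] : exists l : R,
    \forall s \near x, s < x -> 0 <= s -> `|g s| <= `|l| + 1.
  have [x0'|x0'] := ltP 0 x; last by exists 0; near=> s => sx s0; lra.
  have [l gl] := ll x (introT andP (conj x0' xT)); exists l.
  have /cvgrPdist_le/(_ 1 ltr01) := gl.
  rewrite near_withinE; apply: filterS => s gs sx _.
  by have := ler_distD l (g s) 0; rewrite !subr0 distrC; lra.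
exists (`|g x| + `|l| + 1).
apply: filterS2 right_bounded left_bounded => s gr gl /andP[s0 sT].
have := normr_ge0 (g x); have := normr_ge0 l.
case: (ltgtP x s) => [xs|sx|<-]; last lra.
- by have := gr xs sT; lra.
- by have := gl sx s0; lra.
Unshelve. all: by end_near. Qed.

Lemma cadlag_bounded (g : R -> R) : cadlag T g ->
  exists M, forall v, 0 <= v <= T -> `|g v| <= M.
Proof.
move=> cg.
have cover : near_covering_within `[0, T] :=
  (near_covering_withinP _).2 ((compact_near_coveringP _).1 (@segment_compact R 0 T)).
have [//|M [_ HM]] := cover R (pinfty_nbhs R) (fun M v => `|g v| <= M) _.
- move=> x; rewrite /= in_itv /= => hx.
  have [B HB] := cadlag_locally_bounded cg hx.
  exists (fun s => 0 <= s <= T -> `|g s| <= B, [set M | B < M]) => /=.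
    by split => //; exists B; split => //; exact: num_real.
  move=> [s M'] [/= gs BM']; rewrite in_itv /= => sT.
  exact: le_trans (gs sT) (ltW BM').
- exists (M + 1) => v hv; apply: (HM (M + 1)); first lra.
  by rewrite /= in_itv.
Qed.

End cadlag.

Section supab.
Variables (R : realType) (a b : R).
Implicit Type g h : R -> R.

Lemma supab_ge0 g : 0 <= supab a b g.
Proof.
rewrite /supab; have [hs|hs] := pselect (has_sup [set `|g v| | v in [set v | a <= v <= b]]).
  have [[_ [v av _]] _] := hs.
  by apply: le_trans (normr_ge0 (g v)) _; apply: sup_upper_bound => //; exists v.
by rewrite sup_out.
Qed.

Hypothesis ab : a <= b.

Lemma supab_le_bound g c : (forall v, a <= v <= b -> `|g v| <= c) -> supab a b g <= c.
Proof.
move=> gc; apply: ge_sup; first by exists `|g a|, a => //=; rewrite lexx ab.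
by move=> _ [v av <-]; exact: gc.
Qed.

Lemma supab_le g h : (exists M, forall v, a <= v <= b -> `|g v| <= M) ->
  (forall v, a <= v <= b -> `|h v| <= `|g v|) -> supab a b h <= supab a b g.
Proof.
move=> [M gM] hg; apply: supab_le_bound => v av.
apply: le_trans (hg v av) _; apply: sup_upper_bound; last by exists v.
split; first by exists `|g a|, a => //=; rewrite lexx ab.
by exists M => _ [w aw <-]; exact: gM.
Qed.

End supab.

Lemma supab_le_cadlag (R : realType) (T t : R) (g h : R -> R) :
  cadlag T g -> 0 <= t <= T -> (forall v, `|h v| <= `|g v|) -> supab t T h <= supab t T g.
Proof.
move=> cg /andP[t0 tT] hg; apply: supab_le => //.
have [M gM] := cadlag_bounded cg; exists M => v /andP[tv vT].
by apply: gM; rewrite vT (le_trans t0 tv).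
Qed.

Section integral_EFin.
Variables (R : realType) (mu : {measure set R -> \bar R}).
Implicit Types f g : R -> R.

Lemma ge0_le_integral_EFin f g : measurable_fun setT f -> measurable_fun setT g ->
  (forall e, 0 <= f e <= g e) -> (\int[mu]_e (f e)%:E <= \int[mu]_e (g e)%:E)%E.
Proof.
move=> mf mg fg; apply: ge0_le_integral => //.
- by move=> e _; rewrite lee_fin; case/andP: (fg e).
- exact/measurable_EFinP.
- exact/measurable_EFinP.
- by move=> e _; rewrite lee_fin; case/andP: (fg e).
Qed.

Lemma le_integral_sqr f g : measurable_fun setT f -> measurable_fun setT g ->
  (forall e, `|f e| <= `|g e|) ->
  (\int[mu]_e (f e ^+ 2)%:E <= \int[mu]_e (g e ^+ 2)%:E)%E.
Proof.
move=> mf mg fg; apply: ge0_le_integral_EFin (measurable_funX 2 mf) (measurable_funX 2 mg) _.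
by move=> e; rewrite sqr_ge0 ler_sqr_norm.
Qed.

Lemma integralZl_lty f c : measurable_fun setT f -> 0 <= c -> (forall e, 0 <= f e) ->
  (\int[mu]_e (f e)%:E < +oo -> \int[mu]_e (c * f e)%:E < +oo)%E.
Proof.
move=> mf c0 f0 fin; under eq_integral do rewrite EFinM.
rewrite ge0_integralZl_EFin //; first exact: lte_mul_pinfty.
- by move=> e _; rewrite lee_fin.
- exact/measurable_EFinP.
Qed.

Lemma integralD_lty f g : measurable_fun setT f -> measurable_fun setT g ->
  (forall e, 0 <= f e) -> (forall e, 0 <= g e) ->
  (\int[mu]_e (f e)%:E < +oo -> \int[mu]_e (g e)%:E < +oo ->
   \int[mu]_e (f e + g e)%:E < +oo)%E.
Proof.
move=> mf mg f0 g0 ff fg; under eq_integral do rewrite EFinD.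
rewrite ge0_integralD //; first exact: lte_add_pinfty.
- by move=> e _; rewrite lee_fin.
- exact/measurable_EFinP.
- by move=> e _; rewrite lee_fin.
- exact/measurable_EFinP.
Qed.

End integral_EFin.

Section L2.
Variables (R : realType) (k : nat) (nu : 'I_k -> {measure set R -> \bar R}).
Implicit Types a b : 'I_k -> R -> R.

Lemma L2fun_le a b : (forall i, measurable_fun setT (a i)) -> L2fun nu b ->
  (forall i e, `|a i e| <= `|b i e|) -> L2fun nu a.
Proof.
move=> ma hb ab i; split => //; have [mb fb] := hb i.
by apply: le_lt_trans fb; apply: le_integral_sqr.
Qed.

Lemma L2sum_fin_num a : L2fun nu a ->
  (\sum_(i < k) \int[nu i]_e ((a i e) ^+ 2)%:E)%E \is a fin_num.
Proof.
move=> ha; rewrite ge0_fin_numE; first by apply: lte_sum_pinfty => i _; case: (ha i).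
by apply: sume_ge0 => i _; apply: integral_ge0 => e _; rewrite lee_fin sqr_ge0.
Qed.

Lemma L2norm_ge0 a : 0 <= L2norm nu a.
Proof. exact: sqrtr_ge0. Qed.

Lemma L2norm_le a b : (forall i, measurable_fun setT (a i)) -> L2fun nu b ->
  (forall i e, `|a i e| <= `|b i e|) -> L2norm nu a <= L2norm nu b.
Proof.
move=> ma hb ab; have ha := L2fun_le ma hb ab.
rewrite /L2norm ler_sqrt; last first.
  by apply/fine_ge0/sume_ge0 => i _; apply: integral_ge0 => e _; rewrite lee_fin sqr_ge0.
apply: fine_le (L2sum_fin_num ha) (L2sum_fin_num hb) _.
by apply: lee_sum => i _; apply: le_integral_sqr => //; case: (hb i).
Qed.

Lemma L2fun_sub a b : L2fun nu a -> L2fun nu b -> L2fun nu (sub_psi a b).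
Proof.
move=> ha hb i; have [[ma fa] [mb fb]] := (ha i, hb i).
have m2 (h : R -> R) : measurable_fun setT h -> measurable_fun setT (fun e => 2 * h e ^+ 2).
  by move=> mh; apply: measurable_funM => //; exact: measurable_funX 2 mh.
split; first exact: measurable_funB.
apply: (@le_lt_trans _ _ (\int[nu i]_e (2 * a i e ^+ 2 + 2 * b i e ^+ 2)%:E)%E).
  apply: ge0_le_integral_EFin; first exact: measurable_funX 2 (measurable_funB ma mb).
    exact: measurable_funD (m2 _ ma) (m2 _ mb).
  (* (a - b)^2 + (a + b)^2 = 2 a^2 + 2 b^2 *)
  by move=> e; rewrite sqr_ge0 /sub_psi /=; have := sqr_ge0 (a i e + b i e); lra.
apply: integralD_lty (m2 _ ma) (m2 _ mb) _ _ _ _.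
- by move=> e; rewrite mulr_ge0 ?sqr_ge0.
- by move=> e; rewrite mulr_ge0 ?sqr_ge0.
- by apply: (integralZl_lty (measurable_funX 2 ma) _ (fun e => sqr_ge0 (a i e)) fa).
- by apply: (integralZl_lty (measurable_funX 2 mb) _ (fun e => sqr_ge0 (b i e)) fb).
Qed.

Hypothesis nu_moment2 : forall i, (\int[nu i]_e (`|e| ^+ 2)%:E < +oo)%E.

Lemma L2fun_scale_id c : L2fun nu (fun i e => c * e).
Proof.
move=> i; split; first by apply: measurable_funM => //; exact: measurable_id.
under eq_integral => e _ do rewrite exprMn -(real_normK (num_real e)).
apply: integralZl_lty (nu_moment2 i); last by move=> e; exact: sqr_ge0.
- exact: measurable_funX 2 (@normr_measurable R setT).
- exact: sqr_ge0.
Qed.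

Lemma intE_le_moment (G : R -> R) a c : 0 <= c -> measurable_fun setT G ->
  (forall i, measurable_fun setT (a i)) -> (forall i e, 0 <= G (a i e) <= c * `|e| ^+ 2) ->
  (intE nu G a <= (fine (\sum_(i < k) \int[nu i]_e (c * `|e| ^+ 2)%:E))%:E)%E.
Proof.
move=> c0 mG ma Ga.
have mc : measurable_fun setT (fun e : R => c * `|e| ^+ 2).
  by apply: measurable_funM => //; exact: measurable_funX 2 (@normr_measurable R setT).
rewrite fineK; last first.
  rewrite ge0_fin_numE; last first.
    by apply: sume_ge0 => i _; apply: integral_ge0 => e _; rewrite lee_fin mulr_ge0 ?sqr_ge0.
  apply: lte_sum_pinfty => i _; apply: integralZl_lty (nu_moment2 i) => //.
  exact: measurable_funX 2 (@normr_measurable R setT).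
apply: lee_sum => i _; apply: ge0_le_integral_EFin => //.
exact: measurableT_comp mG (ma i).
Qed.

End L2.

Section Linfnorm.
Variables (R : realType) (k : nat) (nu : 'I_k -> {measure set R -> \bar R}).
Implicit Types a b : 'I_k -> R -> R.

Lemma Linfnorm_le a b : (forall i e, `|a i e| <= `|b i e|) -> (Linfnorm nu a <= Linfnorm nu b)%E.
Proof.
move=> ab; apply: le_bigmax2 => i _; apply: le_ess_sup.
by apply: aeW => e; rewrite lee_fin.
Qed.

Lemma Linfnorm_le_bound a c : 0 <= c -> (forall i e, `|a i e| <= c) -> (Linfnorm nu a <= c%:E)%E.
Proof.
move=> c0 ac; apply: bigmax_le; first by rewrite lee_fin.
by move=> i _; apply/ess_supP; apply: aeW => e; rewrite lee_fin.
Qed.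

End Linfnorm.

Section trunc_psi.
Variables (R : realType) (k m : nat).
Implicit Types (psi : 'I_k -> R -> R) (e : R).

Definition cutoff e : R := if (m%:R)^-1 <= `|e| then 1 else 0.

Definition trunc_psi psi : 'I_k -> R -> R := fun i e => phi m (psi i e * cutoff e).

Lemma measurable_cutoff : measurable_fun setT cutoff.
Proof.
have -> : cutoff = \1_[set e | (m%:R)^-1 <= `|e|].
  apply/funext => e; rewrite /cutoff indicE.
  by case: ifP => h; [rewrite mem_set | rewrite memNset //= h].
apply: measurable_indic; rewrite -[X in measurable X]setTI.
exact: normr_measurable (closed_measurable (@closed_ge R _)).
Qed.

Lemma measurable_trunc_psi psi i :
  measurable_fun setT (psi i) -> measurable_fun setT (trunc_psi psi i).
Proof.
move=> mpsi; apply: measurableT_comp (continuous_measurable_fun (@phi_continuous R m)) _.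
exact: measurable_funM mpsi measurable_cutoff.
Qed.

Lemma cutoff01 e : cutoff e = 0 \/ cutoff e = 1.
Proof. by rewrite /cutoff; case: ifP; [right|left]. Qed.

Lemma trunc_psi_between0 psi i e : between0 (trunc_psi psi i e) (psi i e).
Proof.
rewrite /trunc_psi; case: (cutoff01 e) => ->; last by rewrite mulr1 phi_between0.
by rewrite mulr0 phi0 /between0 lexx andbT le_total.
Qed.

Lemma trunc_psi_norm_le psi i e : `|trunc_psi psi i e| <= `|psi i e|.
Proof. exact/between0_norm/trunc_psi_between0. Qed.

Lemma trunc_psi_sub_le psi psi' i e :
  `|trunc_psi psi i e - trunc_psi psi' i e| <= `|sub_psi psi psi' i e|.
Proof.
rewrite /trunc_psi /sub_psi; apply: le_trans (phi_lipschitz _ _ _) _.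
by case: (cutoff01 e) => ->; rewrite ?mulr0 ?mulr1 ?subrr ?normr0.
Qed.

Lemma trunc_psi_bound psi i e : `|trunc_psi psi i e| <= m%:R.
Proof. exact: phi_bound. Qed.

Lemma trunc_psiN psi : trunc_psi (fun i e => - psi i e) = fun i e => - trunc_psi psi i e.
Proof. by apply/funext => i; apply/funext => e; rewrite /trunc_psi mulNr phiN. Qed.

Lemma trunc_psi_support psi i e : (0 < m)%N -> trunc_psi psi i e = 0 \/ 1 <= m%:R * `|e|.
Proof.
move=> m0; have m_gt0 : (0 : R) < m%:R by rewrite ltr0n.
rewrite /trunc_psi /cutoff; case: ifPn => [em|_]; last by left; rewrite mulr0 phi0.
by right; have := ler_wpM2l (ltW m_gt0) em; rewrite mulfV ?lt0r_neq0.
Qed.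

End trunc_psi.

Section trunc_psi_norms.
Variables (R : realType) (k m : nat) (nu : 'I_k -> {measure set R -> \bar R}).
Implicit Types psi : 'I_k -> R -> R.

Lemma L2fun_trunc_psi psi : L2fun nu psi -> L2fun nu (trunc_psi m psi).
Proof.
move=> hpsi; apply: (L2fun_le _ hpsi (@trunc_psi_norm_le R k m psi)) => i.
by apply: measurable_trunc_psi; case: (hpsi i).
Qed.

Lemma L2norm_trunc_psi_le psi : L2fun nu psi -> L2norm nu (trunc_psi m psi) <= L2norm nu psi.
Proof.
move=> hpsi; apply: (L2norm_le _ hpsi (@trunc_psi_norm_le R k m psi)) => i.
by apply: measurable_trunc_psi; case: (hpsi i).
Qed.

Lemma L2norm_trunc_psi_sub_le psi psi' : L2fun nu psi -> L2fun nu psi' ->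
  L2norm nu (sub_psi (trunc_psi m psi) (trunc_psi m psi')) <= L2norm nu (sub_psi psi psi').
Proof.
move=> hpsi hpsi'; apply: (L2norm_le _ (L2fun_sub hpsi hpsi') (@trunc_psi_sub_le R k m psi psi')).
by move=> i; apply: measurable_funB; apply: measurable_trunc_psi; [case: (hpsi i)|case: (hpsi' i)].
Qed.

Lemma Linfnorm_trunc_psi_le psi : (Linfnorm nu (trunc_psi m psi) <= Linfnorm nu psi)%E.
Proof. exact/Linfnorm_le/trunc_psi_norm_le. Qed.

Lemma Linfnorm_trunc_psi_bound psi : (Linfnorm nu (trunc_psi m psi) <= m%:R%:E)%E.
Proof. exact/Linfnorm_le_bound/trunc_psi_bound. Qed.

Lemma intE_jfun_trunc_psi_le g psi : 0 < g -> (forall i, measurable_fun setT (psi i)) ->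
  (intE nu (jfun g) (trunc_psi m psi) <= intE nu (jfun g) psi)%E.
Proof.
move=> g0 mpsi; apply: lee_sum => i _; apply: ge0_le_integral_EFin.
- exact: measurableT_comp (measurable_jfun _) (measurable_trunc_psi _ (mpsi i)).
- exact: measurableT_comp (measurable_jfun _) (mpsi i).
- by move=> e; rewrite jfun_ge0 // jfun_between0 // trunc_psi_between0.
Qed.

Hypothesis nu_moment2 : forall i, (\int[nu i]_e (`|e| ^+ 2)%:E < +oo)%E.
Hypothesis m_gt0 : (0 < m)%N.

(* |trunc_psi| <= m, and it vanishes for |e| < 1/m: hence it is at most m^2 |e|. *)
Lemma L2norm_trunc_psi_bound psi : (forall i, measurable_fun setT (psi i)) ->
  L2norm nu (trunc_psi m psi) <= L2norm nu (fun i e => m%:R ^+ 2 * e).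
Proof.
move=> mpsi; apply: (L2norm_le _ (L2fun_scale_id nu_moment2 _)) => [i|i e].
  exact: measurable_trunc_psi.
case: (trunc_psi_support psi i e m_gt0) => [->|me]; first by rewrite normr0.
apply: le_trans (trunc_psi_bound _ _ _ _) _.
by rewrite normrM ger0_norm ?sqr_ge0 // expr2 -mulrA ler_peMr // ltr0n.
Qed.

Lemma intE_jfun_trunc_psi_bound g : 0 < g -> exists C : R, forall psi,
  (forall i, measurable_fun setT (psi i)) -> (intE nu (jfun g) (trunc_psi m psi) <= C%:E)%E.
Proof.
move=> g0; pose J := jfun g m%:R + jfun g (- m%:R).
have J0 : 0 <= J by rewrite addr_ge0 ?jfun_ge0.
exists (fine (\sum_(i < k) \int[nu i]_e ((J * m%:R ^+ 2) * `|e| ^+ 2)%:E)%E) => psi mpsi.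
apply: intE_le_moment => //; first by rewrite mulr_ge0 ?sqr_ge0.
- exact: measurable_jfun.
- by move=> i; exact: measurable_trunc_psi.
move=> i e; rewrite jfun_ge0 //=.
case: (trunc_psi_support psi i e m_gt0) => [->|me].
  by rewrite jfun0 // !mulr_ge0 ?sqr_ge0.
apply: le_trans (jfun_le_sym g0 (trunc_psi_bound _ _ _ _)) _.
by rewrite -mulrA -exprMn ler_peMr // expr2 mulr_ege1.
Qed.

End trunc_psi_norms.

Section truncated_arguments.
Variables (R : realType) (m : nat).

Lemma enorm_map_phi_le p (z : 'rV[R]_p) : enorm (map_mx (phi m) z) <= enorm z.
Proof. by apply: enorm_le => i; rewrite mxE phi_norm_le. Qed.

Lemma enorm_map_phi_sub_le p (z z' : 'rV[R]_p) :
  enorm (map_mx (phi m) z - map_mx (phi m) z') <= enorm (z - z').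
Proof. by apply: enorm_le => i; rewrite !mxE phi_lipschitz. Qed.

Lemma enorm_map_phi_bound p (z : 'rV[R]_p) :
  enorm (map_mx (phi m) z) <= enorm (const_mx m%:R : 'rV[R]_p).
Proof. by apply: enorm_le_const => i; rewrite mxE phi_bound. Qed.

Variables (T t : R).
Implicit Types q : R -> R.

Lemma cadlag_phi q : cadlag T q -> cadlag T (fun v => phi m (q v)).
Proof. exact: cadlag_comp (@phi_continuous R m). Qed.

Lemma supab_phi_bound q : t <= T -> supab t T (fun v => phi m (q v)) <= m%:R.
Proof. by move=> tT; apply: supab_le_bound => // v _; exact: phi_bound. Qed.

Hypothesis t0T : 0 <= t <= T.

Lemma supab_phi_le q : cadlag T q -> supab t T (fun v => phi m (q v)) <= supab t T q.
Proof. by move=> cq; apply: supab_le_cadlag cq t0T _ => v; exact: phi_norm_le. Qed.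

Lemma supab_phi_sub_le q q' : cadlag T q -> cadlag T q' ->
  supab t T (fun v => phi m (q v) - phi m (q' v)) <= supab t T (fun v => q v - q' v).
Proof.
move=> cq cq'; apply: supab_le_cadlag (cadlagB cq cq') t0T _ => v.
exact: phi_lipschitz.
Qed.

End truncated_arguments.

(* Instance search does not find the Filter instance of this a.e. filter. *)
Lemma ae_lebesgue_mono (R : realType) (P Q : R -> Prop) : (forall t, P t -> Q t) ->
  {ae lebesgue_measure, forall t, P t} -> {ae lebesgue_measure, forall t, Q t}.
Proof. exact: (@filterS _ _ (ae_filter_ringOfSetsType (@lebesgue_measure R))). Qed.

Section fm.
Variables (R : realType) (T : R) (n d k : nat) (nu : 'I_k -> {measure set R -> \bar R}).
Variables (f : gen_type R n d k) (m : nat).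

Lemma MS_i_fm (dO : measure_display) (O : measurableType dO) (P : probability O R)
    (F : R -> set (set O)) :
  MS_i T nu P F f -> MS_i T nu P F (fm f m).
Proof.
move=> MSi x y z psi Y hpsi hY cY.
have adapted_phiY : adapted F (fun v w => phi m (Y v w)).
  move=> s B mB; rewrite -[_ @^-1` B]/(Y s @^-1` (phi m @^-1` B)).
  apply: hY; rewrite -[X in measurable X]setTI.
  exact: continuous_measurable_fun (@phi_continuous R m) _ _ mB.
exact: MSi _ _ _ (trunc_psi m psi) _ (L2fun_trunc_psi m hpsi) adapted_phiY
  (fun w => cadlag_phi m (cY w)).
Qed.

Lemma MS_ii_fm beta delta gamma l : 0 <= beta -> 0 <= delta -> 0 < gamma ->
  MS_ii T nu f beta delta gamma l -> MS_ii T nu (fm f m) beta delta gamma l.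
Proof.
move=> b0 d0 g0 MSii x q y z psi cq hpsi.
have mpsi i := (hpsi i).1.
have mNpsi i : measurable_fun setT (fun e => - psi i e) by exact: measurable_funN.
have := MSii x _ (phi m y) (map_mx (phi m) z) _ (cadlag_phi m cq) (L2fun_trunc_psi m hpsi).
apply: ae_lebesgue_mono => t H ht.
have [lower upper] := H ht.
have hq := ler_wpM2l d0 (supab_phi_le m ht cq).
have hy := ler_wpM2l b0 (phi_norm_le m y).
have hz : gamma / 2 * enorm (map_mx (phi m) z) ^+ 2 <= gamma / 2 * enorm z ^+ 2.
  apply: ler_wpM2l; first by rewrite divr_ge0 // ltW.
  by apply: ler_sqr_norm; rewrite !ger0_norm ?enorm_ge0 // enorm_map_phi_le.
split.
- apply: le_trans lower; apply: leeB; first by rewrite lee_fin; lra.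
  by rewrite -trunc_psiN; exact: intE_jfun_trunc_psi_le.
- apply: le_trans upper _; apply: leeD; first by rewrite lee_fin; lra.
  exact: intE_jfun_trunc_psi_le.
Qed.

Lemma ML_consts_fm xi (K : R -> R) Kxi rho alpha : 0 < T ->
  ML_consts T nu f xi K Kxi rho alpha -> ML_consts T nu (fm f m) xi K Kxi rho alpha.
Proof.
move=> T0 [K_gt0 consts MLf xi_hoelder]; split => //.
move=> M M0 x x' q q' y y' z z' psi psi' cq cq' hpsi hpsi' yM y'M psiM psi'M qM q'M.
have T0T : (0 : R) <= 0 <= T by rewrite lexx (ltW T0).
have := MLf M M0 x x' _ _ (phi m y) (phi m y') (map_mx (phi m) z) (map_mx (phi m) z') _ _
  (cadlag_phi m cq) (cadlag_phi m cq') (L2fun_trunc_psi m hpsi) (L2fun_trunc_psi m hpsi')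
  (le_trans (phi_norm_le m y) yM) (le_trans (phi_norm_le m y') y'M)
  (le_trans (Linfnorm_trunc_psi_le m nu psi) psiM)
  (le_trans (Linfnorm_trunc_psi_le m nu psi') psi'M)
  (le_trans (supab_phi_le m T0T cq) qM) (le_trans (supab_phi_le m T0T cq') q'M).
apply: ae_lebesgue_mono => t H ht; have [lip hoelder] := H ht.
have KM0 : 0 <= K M by exact/ltW/K_gt0.
have hz := enorm_map_phi_le m z; have hz' := enorm_map_phi_le m z'.
have hpsiL := L2norm_trunc_psi_le m hpsi; have hpsi'L := L2norm_trunc_psi_le m hpsi'.
split.
- apply: le_trans lip _; apply: lerD.
    apply: ler_wpM2l => //; rewrite lerD ?lerD ?L2norm_trunc_psi_sub_le //.
      exact: supab_phi_sub_le.
    exact: phi_lipschitz.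
  apply: ler_pM; rewrite ?enorm_ge0 ?enorm_map_phi_sub_le //.
    by rewrite mulr_ge0 // !addr_ge0 ?L2norm_ge0 ?enorm_ge0.
  by rewrite ler_wpM2l // !lerD.
- apply: le_trans hoelder _; rewrite ler_wpM2r ?powR_ge0 // ler_wpM2l // !lerD //.
    by apply: ler_sqr_norm; rewrite !ger0_norm ?enorm_ge0.
  by apply: ler_sqr_norm; rewrite !ger0_norm ?L2norm_ge0.
Qed.

Hypothesis nu_moment2 : forall i, (\int[nu i]_e (`|e| ^+ 2)%:E < +oo)%E.
Hypothesis m_gt0 : (0 < m)%N.

Lemma fm_ae_bounded beta delta gamma l : 0 <= beta -> 0 <= delta -> 0 < gamma ->
  MS_ii T nu f beta delta gamma l -> (exists C, forall t, 0 <= t <= T -> l t <= C) ->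
  exists C : R, forall x q y z psi, cadlag T q -> L2fun nu psi ->
    {ae lebesgue_measure, forall t, 0 <= t <= T -> `|fm f m t x q y z psi| <= C}.
Proof.
move=> b0 d0 g0 MSii [Cl lCl].
have [Cint hCint] := intE_jfun_trunc_psi_bound nu_moment2 m_gt0 g0.
pose Ez := enorm (const_mx m%:R : 'rV[R]_d).
pose C0 := Cl + delta * m%:R + beta * m%:R + gamma / 2 * Ez ^+ 2.
exists (C0 + Cint) => x q y z psi cq hpsi.
have mpsi i := (hpsi i).1.
have mNpsi i : measurable_fun setT (fun e => - psi i e) by exact: measurable_funN.
have := MSii x _ (phi m y) (map_mx (phi m) z) _ (cadlag_phi m cq) (L2fun_trunc_psi m hpsi).
apply: ae_lebesgue_mono => t H ht; have [lower upper] := H ht.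
have /andP[_ tT] := ht.
have hq := ler_wpM2l d0 (supab_phi_bound m q tT).
have hq0 := mulr_ge0 d0 (supab_ge0 t T (fun v => phi m (q v))).
have hy := ler_wpM2l b0 (phi_bound m y).
have hy0 := mulr_ge0 b0 (normr_ge0 (phi m y)).
have hz : gamma / 2 * enorm (map_mx (phi m) z) ^+ 2 <= gamma / 2 * Ez ^+ 2.
  apply: ler_wpM2l; first by rewrite divr_ge0 // ltW.
  by apply: ler_sqr_norm; rewrite !ger0_norm ?enorm_ge0 // enorm_map_phi_bound.
have hz0 : 0 <= gamma / 2 * enorm (map_mx (phi m) z) ^+ 2.
  by rewrite mulr_ge0 ?sqr_ge0 // divr_ge0 // ltW.
have hl := lCl t ht.
rewrite ler_norml; apply/andP; split.
- rewrite opprD -lee_fin EFinB; apply: le_trans lower; apply: leeB.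
    by rewrite lee_fin /C0; lra.
  by rewrite -trunc_psiN; exact: hCint.
- rewrite -lee_fin EFinD; apply: le_trans upper _; apply: leeD; last exact: hCint.
  by rewrite lee_fin /C0; lra.
Qed.

Lemma fm_ae_lipschitz xi (K : R -> R) Kxi rho alpha : 0 < T ->
  ML_consts T nu f xi K Kxi rho alpha ->
  exists L : R, 0 < L /\ forall x q q' y y' z z' psi psi',
    cadlag T q -> cadlag T q' -> L2fun nu psi -> L2fun nu psi' ->
    {ae lebesgue_measure, forall t, 0 <= t <= T ->
       `|fm f m t x q y z psi - fm f m t x q' y' z' psi'|
         <= L * (supab t T (fun v => q v - q' v) + `|y - y'|
                 + enorm (z - z') + L2norm nu (sub_psi psi psi'))}.
Proof.
move=> T0 [K_gt0 _ MLf _].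
have m_pos : (0 : R) < m%:R by rewrite ltr0n.
have KM0 := K_gt0 _ m_pos.
pose Ez := enorm (const_mx m%:R : 'rV[R]_d).
pose Bm := L2norm nu (fun i e => m%:R ^+ 2 * e).
pose c := K m%:R * (1 + Ez + Ez + Bm + Bm).
have c0 : 0 <= c.
  by apply: mulr_ge0; [exact: ltW | rewrite !addr_ge0 ?enorm_ge0 ?L2norm_ge0].
exists (K m%:R + c); split; first lra.
move=> x q q' y y' z z' psi psi' cq cq' hpsi hpsi'.
have mpsi i := (hpsi i).1; have mpsi' i := (hpsi' i).1.
(* All truncated arguments are bounded by m, so (ML) applies at level M = m. *)
have := MLf m%:R m_pos x x _ _ (phi m y) (phi m y') (map_mx (phi m) z) (map_mx (phi m) z')
  _ _ (cadlag_phi m cq) (cadlag_phi m cq') (L2fun_trunc_psi m hpsi) (L2fun_trunc_psi m hpsi')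
  (phi_bound m y) (phi_bound m y')
  (Linfnorm_trunc_psi_bound m nu psi) (Linfnorm_trunc_psi_bound m nu psi')
  (supab_phi_bound m q (ltW T0)) (supab_phi_bound m q' (ltW T0)).
apply: ae_lebesgue_mono => t H ht; have [lip _] := H ht.
apply: le_trans lip _.
set X := supab t T (fun v => q v - q' v) + `|y - y'| + L2norm nu (sub_psi psi psi').
set D := enorm (z - z').
have X0 : 0 <= X by rewrite /X !addr_ge0 ?L2norm_ge0 ?supab_ge0.
have D0 : 0 <= D := enorm_ge0 _.
have lipX : K m%:R * (supab t T (fun v => phi m (q v) - phi m (q' v))
    + `|phi m y - phi m y'| + L2norm nu (sub_psi (trunc_psi m psi) (trunc_psi m psi')))
    <= K m%:R * X.
  apply: ler_wpM2l; first exact: ltW.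
  rewrite /X lerD ?lerD ?L2norm_trunc_psi_sub_le //.
    exact: supab_phi_sub_le.
  exact: phi_lipschitz.
have lipD : K m%:R * (1 + enorm (map_mx (phi m) z) + enorm (map_mx (phi m) z')
    + L2norm nu (trunc_psi m psi) + L2norm nu (trunc_psi m psi'))
    * enorm (map_mx (phi m) z - map_mx (phi m) z') <= c * D.
  apply: ler_pM; rewrite ?enorm_ge0 ?enorm_map_phi_sub_le //.
    by apply: mulr_ge0; [exact: ltW | rewrite !addr_ge0 ?L2norm_ge0 ?enorm_ge0].
  apply: ler_wpM2l; first exact: ltW.
  by rewrite !lerD ?enorm_map_phi_bound ?L2norm_trunc_psi_bound.
have -> : (K m%:R + c) * (supab t T (fun v => q v - q' v) + `|y - y'| + D
    + L2norm nu (sub_psi psi psi')) = K m%:R * X + c * D + (K m%:R * D + c * X).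
  by rewrite /X; ring.
have := mulr_ge0 (ltW KM0) D0; have := mulr_ge0 c0 X0; lra.
Qed.

End fm.

Theorem lemma4p2 (R : realType) (T : R) (d k n : nat)
  (nu : 'I_k -> {measure set R -> \bar R})
  (dO : measure_display) (O : measurableType dO) (P : probability O R)
  (F : R -> set (set O))
  (f : gen_type R n d k) (xi : 'rV[R]_n -> R) :
  0 < T ->
  (forall i, sigma_finite setT (nu i)) ->
  (forall i, nu i [set 0] = 0%E) ->
  (forall i, (\int[nu i]_e (`|e| ^+ 2)%:E < +oo)%E) ->
  filtration F ->
  MS T nu P F f xi -> ML T nu f xi ->
  [/\ (* (MS)(i) for every f_m *)
      (forall m, (0 < m)%N -> MS_i T nu P F (fm f m)),
      (* (MS)(ii),(iii) uniformly in m *)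
      (exists beta delta gamma l, forall m, (0 < m)%N ->
         MS_consts T nu (fm f m) xi beta delta gamma l),
      (* (ML) uniformly in m *)
      (exists K Kxi rho alpha, forall m, (0 < m)%N ->
         ML_consts T nu (fm f m) xi K Kxi rho alpha),
      (* each f_m is a.e. bounded *)
      (forall m, (0 < m)%N -> exists C : R,
         forall x q y z psi, cadlag T q -> L2fun nu psi ->
           {ae lebesgue_measure, forall t, 0 <= t <= T ->
              `|fm f m t x q y z psi| <= C}) &
      (* each f_m is globally Lipschitz in (q, y, z, psi) *)
      (forall m, (0 < m)%N -> exists L : R, 0 < L /\
         forall x q q' y y' z z' psi psi',
           cadlag T q -> cadlag T q' -> L2fun nu psi -> L2fun nu psi' ->
           {ae lebesgue_measure, forall t, 0 <= t <= T ->
              `|fm f m t x q y z psi - fm f m t x q' y' z' psi'|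
                <= L * (supab t T (fun v => q v - q' v) + `|y - y'|
                        + enorm (z - z') + L2norm nu (sub_psi psi psi'))})].
Proof.
move=> T0 _ _ nu_moment2 _ [MSi [beta [delta [gamma [l MSc]]]]] [K [Kxi [rho [alpha MLc]]]].
have [[b0 d0 g0] l_gt0 MSii MSiii] := MSc.
split.
- by move=> m _; exact: MS_i_fm.
- by exists beta, delta, gamma, l => m _; split => //; exact: MS_ii_fm.
- by exists K, Kxi, rho, alpha => m _; exact: ML_consts_fm.
- by move=> m m0; exact: fm_ae_bounded MSii MSiii.2.
- by move=> m m0; exact: fm_ae_lipschitz MLc.
Qed.
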